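(* Let $\omega\in(0,\pi/2]$, let $S$ be a monotone sofa with rotation angle $\omega$, and let $K=\mathcal{C}(S)$. Then $\mathcal{N}(K)\subseteq K$.
   Context: For $t\in\mathbb{R}$ put $u_t=(\cos t,\sin t)$, $v_t=(-\sin t,\cos t)$; $R_t$ is counterclockwise rotation about the origin by $t$. For nonempty compact $X$, $p_X(t)=\max_{p\in X}p\cdot u_t$; $H(t,h)=\{p:p\cdot u_t\le h\}$. The hallway is $L=L_H\cup L_V$, $L_H=(-\infty,1]\times[0,1]$, $L_V=[0,1]\times(-\infty,1]$. A moving sofa is a connected, nonempty, compact $S\subset\mathbb{R}^2$ such that some translate of $S$ lies in $L_H$ and can be moved by a continuous rigid motion inside $L$ to a subset of $L_V$; its rotation angle $\omega\in(0,\pi/2]$ is the total clockwise angle rotated (fixed data of the sofa). It is in standard position if $p_S(\omega)=p_S(\pi/2)=1$. Let $H=\mathbb{R}\times[0,1]$, $V=[0,1]\times\mathbb{R}$, $P_\omega=H\cap R_\omega(V)$. For nonempty compact $X$: $L_X(t)=R_t(L)+(p_X(t)-1)u_t+(p_X(t+\pi/2)-1)v_t$, $Q_X^+(t)=H(t,p_X(t))\cap H(t+\pi/2,p_X(t+\pi/2))$, $Q_X^-(t)=\{p:p\cdot u_t<p_X(t)-1,\ p\cdot v_t<p_X(t+\pi/2)-1\}$. A monotone sofa with rotation angle $\omega$ is a set $P_\omega\cap\bigcap_{0\le t\le\omega}L_{S'}(t)$ for some moving sofa $S'$ with rotation angle $\omega$ in standard position. $\mathcal{C}(S)=P_\omega\cap\bigcap_{0\le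 t\le\omega}Q_S^+(t)$. Fan $F_\omega=\{(x,y):y\ge0,\ x\cos\omega+y\sin\omega\ge0\}$; niche $\mathcal{N}(K)=F_\omega\cap\bigcup_{0\le t\le\omega}Q_K^-(t)$. *)

From HB Require Import structures.
From mathcomp Require Import all_boot all_order all_algebra.
From mathcomp Require Import all_classical all_reals all_analysis.
Set Implicit Arguments. Unset Strict Implicit. Unset Printing Implicit Defensive.
Import Order.TTheory GRing.Theory Num.Theory.
Import numFieldNormedType.Exports.
Local Open Scope classical_set_scope.
Local Open Scope ring_scope.

Section Sofa.
Variable R : realType.
Implicit Types (t h w : R) (p q : R * R) (X : set (R * R)).

Definition vadd p q : R * R := (p.1 + q.1, p.2 + q.2).
Definition vscale (a : R) p : R * R := (a * p.1, a * p.2).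
Definition dot p q : R := p.1 * q.1 + p.2 * q.2.
Definition uvec t : R * R := (cos t, sin t).
Definition vvec t : R * R := (- sin t, cos t).
Definition rot t p : R * R :=
  (cos t * p.1 - sin t * p.2, sin t * p.1 + cos t * p.2).

(* support function p_X(t) = max_{p in X} p . u_t  (a sup, attained for
   nonempty compact X) *)
Definition suppf X t : R := sup [set dot p (uvec t) | p in X].
Definition halfp t h : set (R * R) := [set p | dot p (uvec t) <= h].

Definition L_H : set (R * R) := [set p | p.1 <= 1 /\ 0 <= p.2 <= 1].
Definition L_V : set (R * R) := [set p | 0 <= p.1 <= 1 /\ p.2 <= 1].
Definition hallway : set (R * R) := L_H `|` L_V.

Definition motion (th : R) (x : R * R) p : R * R := vadd (rot th p) x.

Definition moving_sofa w (S : set (R * R)) : Prop :=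
  0 < w <= pi / 2 /\ S !=set0 /\ compact S /\ connected S /\
  exists (th : R -> R) (x : R -> R * R),
    {within [set` `[0, 1]], continuous th} /\
    {within [set` `[0, 1]], continuous x} /\
    th 0 = 0 /\ th 1 = - w /\
    motion (th 0) (x 0) @` S `<=` L_H /\
    (forall s, 0 <= s <= 1 -> motion (th s) (x s) @` S `<=` hallway) /\
    motion (th 1) (x 1) @` S `<=` L_V.

Definition standard_position w X : Prop :=
  suppf X w = 1 /\ suppf X (pi / 2) = 1.

Definition Hstrip : set (R * R) := [set p | 0 <= p.2 <= 1].
Definition Vstrip : set (R * R) := [set p | 0 <= p.1 <= 1].
Definition Pw w : set (R * R) := Hstrip `&` (rot w @` Vstrip).

Definition LX X t : set (R * R) :=
  [set vadd (rot t q)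
        (vadd (vscale (suppf X t - 1) (uvec t))
              (vscale (suppf X (t + pi / 2) - 1) (vvec t))) | q in hallway].

Definition QXp X t : set (R * R) :=
  halfp t (suppf X t) `&` halfp (t + pi / 2) (suppf X (t + pi / 2)).

Definition QXm X t : set (R * R) :=
  [set p | dot p (uvec t) < suppf X t - 1 /\
           dot p (vvec t) < suppf X (t + pi / 2) - 1].

Definition monotone_sofa w (S : set (R * R)) : Prop :=
  exists S' : set (R * R), moving_sofa w S' /\ standard_position w S' /\
    S = Pw w `&` \bigcap_(t in [set t | 0 <= t <= w]) LX S' t.

Definition cap w X : set (R * R) :=
  Pw w `&` \bigcap_(t in [set t | 0 <= t <= w]) QXp X t.

Definition fan w : set (R * R) :=
  [set p | 0 <= p.2 /\ 0 <= p.1 * cos w + p.2 * sin w].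

Definition niche w K : set (R * R) :=
  fan w `&` \bigcup_(t in [set t | 0 <= t <= w]) QXm K t.

End Sofa.

From Pilot Require Import Defs.
From mathcomp Require Import all_boot all_order all_algebra.
From mathcomp Require Import all_classical all_reals all_analysis.
From mathcomp Require Import ring lra.
Set Implicit Arguments. Unset Strict Implicit. Unset Printing Implicit Defensive.
Import Order.TTheory GRing.Theory Num.Theory.
Import numFieldNormedType.Exports.
Local Open Scope classical_set_scope.
Local Open Scope ring_scope.

(* A point [q] of the niche lies strictly inside the inner corner of
   [L_{S'}(t)] for some [t], where [S'] is the moving sofa generating [S].
   Being connected, contained in [L_{S'}(t)] and touching both of its outer
   walls, [S'] has a point [m] at or beyond that corner, and [m] dominates [q]
   in every direction of [[t, t + pi/2]].  In a direction [s < t], [q] is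
   dominated instead by a point of [S'] beating [q] by more than [1] in
   direction [t]: that point lies below [y = 1] while [q] lies above [y = 0].
   Symmetrically for directions [s + pi/2] with [s > t], using the second edge
   of the fan and of [P_w].  As [S'] is contained in [S], [q] meets every
   support constraint of [C(S)]. *)

Section Directions.
Variable R : realType.
Implicit Types (a b c s t : R) (x y p q z : R * R).

Lemma dot_uvec z t : dot z (uvec t) = z.1 * cos t + z.2 * sin t.
Proof. by []. Qed.

Lemma vvecE t : vvec t = uvec (t + pi / 2).
Proof. by rewrite /uvec /vvec cosDpihalf sinDpihalf. Qed.

Lemma dot_uvec_pihalf z : dot z (uvec (pi / 2)) = z.2.
Proof. by rewrite dot_uvec cos_pihalf sin_pihalf mulr0 mulr1 add0r. Qed.

Lemma dot_uvecN z t : dot (z.1, - z.2) (uvec (- t)) = dot z (uvec t).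
Proof. by rewrite !dot_uvec cosN sinN mulrNN. Qed.

Lemma dot_rot_uvec q t : dot (Defs.rot t q) (uvec t) = q.1.
Proof.
rewrite dot_uvec /=; transitivity (q.1 * (cos t ^+ 2 + sin t ^+ 2)); first ring.
by rewrite cos2Dsin2 mulr1.
Qed.

Lemma dot_rot_vvec q t : dot (Defs.rot t q) (vvec t) = q.2.
Proof.
rewrite /dot /=; transitivity (q.2 * (cos t ^+ 2 + sin t ^+ 2)); first ring.
by rewrite cos2Dsin2 mulr1.
Qed.

Lemma rot_dot_uvec_vvec z t : Defs.rot t (dot z (uvec t), dot z (vvec t)) = z.
Proof.
case: z => z1 z2; rewrite /Defs.rot /dot /=; congr pair.
  transitivity (z1 * (cos t ^+ 2 + sin t ^+ 2)); first ring.
  by rewrite cos2Dsin2 mulr1.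
transitivity (z2 * (cos t ^+ 2 + sin t ^+ 2)); first ring.
by rewrite cos2Dsin2 mulr1.
Qed.

Lemma dot_uvec_interpolate z a b c :
  sin (c - a) * dot z (uvec b) =
  sin (c - b) * dot z (uvec a) + sin (b - a) * dot z (uvec c).
Proof. by rewrite !dot_uvec !sinB; ring. Qed.

Lemma sin_ge0_pihalf a : 0 <= a <= pi / 2 -> 0 <= sin a.
Proof.
move=> /andP[a0 api]; apply: sin_ge0_pi; rewrite a0 /=.
have : 0 <= pi :> R by exact: pi_ge0.
lra.
Qed.

Lemma ler_sin_pihalf a b : 0 <= a -> a <= b -> b <= pi / 2 -> sin a <= sin b.
Proof.
move=> a0 ab bpi; have pi0 : 0 <= pi :> R by exact: pi_ge0.
rewrite le_eqVlt in ab; case/orP: ab => [/eqP -> //|ab].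
by rewrite ltW // ltr_sin // in_itv /=; apply/andP; split; lra.
Qed.

Lemma dot_uvec_le_quarter q m t s : t <= s <= t + pi / 2 ->
  dot q (uvec t) <= dot m (uvec t) ->
  dot q (uvec (t + pi / 2)) <= dot m (uvec (t + pi / 2)) ->
  dot q (uvec s) <= dot m (uvec s).
Proof.
move=> /andP[ts st] le_t le_t'.
have quarter : t + pi / 2 - t = pi / 2 by ring.
have := dot_uvec_interpolate q t s (t + pi / 2).
have := dot_uvec_interpolate m t s (t + pi / 2).
rewrite quarter sin_pihalf !mul1r => -> ->.
by apply: lerD; apply: ler_wpM2l => //; apply: sin_ge0_pihalf; lra.
Qed.

Lemma dot_uvec_le_sandwich q p a b c : a <= b <= c -> c - a <= pi / 2 ->
  0 <= dot q (uvec c) -> dot p (uvec c) <= 1 ->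
  dot q (uvec b) + 1 < dot p (uvec b) ->
  dot q (uvec a) <= dot p (uvec a).
Proof.
move=> /andP[ab bc] ca qc pc gap.
have [cb|lt_bc] := leP c b.
  have eq_bc : b = c by apply/le_anti; rewrite bc cb.
  by rewrite eq_bc in gap; lra.
have sin_cb : 0 < sin (c - b).
  by apply: sin_gt0_pi; have := @pi_gt0 R; lra.
have sin_ba : 0 <= sin (b - a) by apply: sin_ge0_pihalf; lra.
have sin_le : sin (b - a) <= sin (c - a) by apply: ler_sin_pihalf; lra.
have Eq : sin (c - b) * dot q (uvec a) =
    sin (c - a) * dot q (uvec b) - sin (b - a) * dot q (uvec c).
  by rewrite (dot_uvec_interpolate q a b c); ring.
have Ep : sin (c - b) * dot p (uvec a) =
    sin (c - a) * dot p (uvec b) - sin (b - a) * dot p (uvec c).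
  by rewrite (dot_uvec_interpolate p a b c); ring.
rewrite -(ler_pM2l sin_cb) Eq Ep.
have : sin (c - a) * dot q (uvec b) <= sin (c - a) * (dot p (uvec b) - 1).
  by apply: ler_wpM2l; lra.
have : 0 <= sin (b - a) * dot q (uvec c) by rewrite mulr_ge0.
have : sin (b - a) * dot p (uvec c) <= sin (b - a).
  by rewrite -[leRHS]mulr1 ler_wpM2l.
lra.
Qed.

Lemma dot_uvec_le_sandwich_rev q p a b c : c <= b <= a -> a - c <= pi / 2 ->
  0 <= dot q (uvec c) -> dot p (uvec c) <= 1 ->
  dot q (uvec b) + 1 < dot p (uvec b) ->
  dot q (uvec a) <= dot p (uvec a).
Proof.
move=> /andP[cb ba] ac; rewrite -!(dot_uvecN _ a) -!(dot_uvecN _ b) -!(dot_uvecN _ c).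
by apply: dot_uvec_le_sandwich; lra.
Qed.

Lemma motion0 x p : motion 0 x p = (p.1 + x.1, p.2 + x.2).
Proof. by rewrite /motion /vadd /Defs.rot cos0 sin0 /=; congr pair; ring. Qed.

Lemma motionN t x p :
  motion (- t) x p = (dot p (uvec t) + x.1, dot p (uvec (t + pi / 2)) + x.2).
Proof.
by rewrite -vvecE /motion /vadd /Defs.rot /dot /uvec /vvec /= cosN sinN;
  congr pair; ring.
Qed.

Lemma continuous_dot (u : R * R) : continuous (fun z : R * R => dot z u).
Proof.
by move=> z; apply: cvgD; apply: cvgMr_tmp; [exact: cvg_fst | exact: cvg_snd].
Qed.

End Directions.

Section SupportFunction.
Variable R : realType.
Implicit Types (X Y : set (R * R)) (t M x y : R) (p z : R * R).

Lemma suppf_ge X t p : has_ubound [set dot p (uvec t) | p in X] -> X p ->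
  dot p (uvec t) <= suppf X t.
Proof. by move=> ub Xp; apply: ub_le_sup ub _ _; exists p. Qed.

Lemma suppf_le X t M : X !=set0 -> (forall p, X p -> dot p (uvec t) <= M) ->
  suppf X t <= M.
Proof.
move=> [p0 Xp0] le_M; apply: ge_sup; first by exists (dot p0 (uvec t)), p0.
by move=> _ [p Xp <-]; exact: le_M.
Qed.

Lemma suppf_gt X t x : X !=set0 -> x < suppf X t ->
  exists2 p, X p & x < dot p (uvec t).
Proof.
move=> [p0 Xp0] /(sup_gt _) [|_ [p Xp <-] lt_x]; last by exists p.
by exists (dot p0 (uvec t)), p0.
Qed.

Lemma compact_dot_ubound X t : compact X -> has_ubound [set dot p (uvec t) | p in X].
Proof.
move=> cX; have /compact_bounded [M [_ bM]] : compact [set dot p (uvec t) | p in X].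
  by apply: continuous_compact => //; apply: continuous_subspaceT; exact: continuous_dot.
exists (M + 1) => y Xy; apply: le_trans (ler_norm y) _.
by apply: bM Xy; lra.
Qed.

Lemma suppf_le_of_sub_QXp X Y t : X !=set0 -> X `<=` QXp Y t ->
  suppf X t <= suppf Y t /\ suppf X (t + pi / 2) <= suppf Y (t + pi / 2).
Proof.
by move=> X0 XY; split; apply: suppf_le => // p /XY [].
Qed.

Lemma suppf_eq1_strip X t y : X !=set0 -> suppf X t = 1 ->
  (forall p, X p -> 0 <= dot p (uvec t) + y <= 1) ->
  forall z, X z -> 0 <= dot z (uvec t) <= 1.
Proof.
move=> X0 sX1 inX z Xz.
have ubX : has_ubound [set dot p (uvec t) | p in X].
  by exists (1 - y) => _ [p /inX Xp <-]; lra.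
have : suppf X t <= 1 - y by apply: suppf_le X0 _ => p /inX; lra.
have := suppf_ge ubX Xz; have := inX z Xz; rewrite sX1; lra.
Qed.

End SupportFunction.

Section Hallway.
Variable R : realType.
Implicit Types (X : set (R * R)) (t w : R) (p q z : R * R).

Lemma hallway_le1 q : hallway q -> q.1 <= 1 /\ q.2 <= 1.
Proof. by case=> [[? /andP[]]|[/andP[]]]. Qed.

Lemma hallway_ge0 q : hallway q -> 0 <= q.1 \/ 0 <= q.2.
Proof. by case=> [[_ /andP[]]|[/andP[]]]; [right|left]. Qed.

Lemma hallway_up q p : hallway q -> q.1 <= p.1 <= 1 -> q.2 <= p.2 <= 1 ->
  hallway p.
Proof.
move=> [[q1 /andP[q20 q21]]|[/andP[q10 q11] q2]] /andP[qp1 p1] /andP[qp2 p2].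
  by left; split => //; apply/andP; split; lra.
by right; split => //; apply/andP; split; lra.
Qed.

Lemma LXE X t : LX X t =
  [set Defs.rot t (q.1 + (suppf X t - 1), q.2 + (suppf X (t + pi / 2) - 1))
  | q in @hallway R].
Proof.
rewrite /LX; congr image; apply: funext => q.
by rewrite /vadd /vscale /uvec /vvec /Defs.rot /=; congr pair; ring.
Qed.

Lemma LXP X t z : LX X t z <->
  hallway (dot z (uvec t) - suppf X t + 1,
           dot z (uvec (t + pi / 2)) - suppf X (t + pi / 2) + 1).
Proof.
rewrite LXE -vvecE; split.
  case=> q hq <-; rewrite dot_rot_uvec dot_rot_vvec /=.
  by congr hallway: hq; case: q => q1 q2 /=; congr pair; ring.
move=> hz; eexists; first exact: hz.
rewrite -[RHS](rot_dot_uvec_vvec z t) /=; congr (Defs.rot t (_, _)); ring.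
Qed.

Lemma LX_sub_QXp X t : LX X t `<=` QXp X t.
Proof.
move=> z /LXP /hallway_le1 [/= z1 z2].
by split; rewrite /halfp /=; lra.
Qed.

Lemma LX_corner X t z : LX X t z ->
  suppf X t - 1 <= dot z (uvec t) \/
  suppf X (t + pi / 2) - 1 <= dot z (uvec (t + pi / 2)).
Proof. by move=> /LXP /hallway_ge0 /= [z1|z2]; [left|right]; lra. Qed.

Lemma PwP w z : Pw w z <-> 0 <= z.2 <= 1 /\ 0 <= dot z (uvec w) <= 1.
Proof.
split=> [[z2 [r r1 rz]]|[z2 zw]].
  by split=> //; rewrite -rz dot_rot_uvec.
split=> //; exists (dot z (uvec w), dot z (vvec w)) => //.
exact: rot_dot_uvec_vvec.
Qed.

End Hallway.

Section MovingSofa.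
Variables (R : realType) (w : R) (S' : set (R * R)).
Hypothesis sofa : moving_sofa w S'.
Implicit Types (t : R) (p z : R * R).

Lemma sofa_angle : 0 < w <= pi / 2.
Proof. by case: sofa. Qed.

Lemma sofa_nonempty : S' !=set0.
Proof. by case: sofa => _ []. Qed.

Lemma sofa_dot_ubound t : has_ubound [set dot p (uvec t) | p in S'].
Proof. by case: sofa => _ [_ [cS _]]; exact: compact_dot_ubound. Qed.

Lemma sofa_start : exists y : R, forall p, S' p -> 0 <= p.2 + y <= 1.
Proof.
case: sofa => _ [_ [_ [_ [th [x [_ [_ [th0 [_ [inLH _]]]]]]]]]].
exists (x 0).2 => p S'p; have := inLH _ (imageP _ S'p).
by rewrite th0 motion0 => -[].
Qed.

Lemma sofa_end : exists y : R, forall p, S' p -> 0 <= dot p (uvec w) + y <= 1.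
Proof.
case: sofa => _ [_ [_ [_ [th [x [_ [_ [_ [th1 [_ [_ inLV]]]]]]]]]]].
exists (x 1).1 => p S'p; have := inLV _ (imageP _ S'p).
by rewrite th1 motionN => -[].
Qed.

(* The sofa at the moment it has turned clockwise by [t], which exists by the
   intermediate value theorem. *)
Lemma sofa_turn t : 0 <= t <= w -> exists x : R * R,
  forall p, S' p -> hallway (dot p (uvec t) + x.1, dot p (uvec (t + pi / 2)) + x.2).
Proof.
case: sofa => _ [_ [_ [_ [th [x [cth [_ [th0 [th1 [_ [inL _]]]]]]]]]]] t0w.
have [c c01 thc] : exists2 c, c \in `[0, 1] & th c = - t.
  by apply: IVT => //; rewrite th0 th1 ge_min le_max; apply/andP; split;
    apply/orP; [right|left]; lra.
move: c01; rewrite in_itv /= => c01.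
exists (x c) => p S'p; rewrite -motionN -thc.
exact: inL _ c01 _ (imageP _ S'p).
Qed.

Lemma sofa_sub_Pw : standard_position w S' -> S' `<=` Pw w.
Proof.
move=> [sw spi] z S'z; apply/PwP; split.
  have [y inH] := sofa_start; rewrite -dot_uvec_pihalf.
  apply: suppf_eq1_strip sofa_nonempty spi _ _ S'z => p.
  by rewrite dot_uvec_pihalf; exact: inH.
have [y inV] := sofa_end.
exact: suppf_eq1_strip sofa_nonempty sw inV _ S'z.
Qed.

Lemma sofa_sub_LX t : 0 <= t <= w -> S' `<=` LX S' t.
Proof.
move=> t0w; have [x inL] := sofa_turn t0w.
have le1 : suppf S' t <= 1 - x.1.
  by apply: suppf_le sofa_nonempty _ => p /inL /hallway_le1 /= []; lra.
have le2 : suppf S' (t + pi / 2) <= 1 - x.2.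
  by apply: suppf_le sofa_nonempty _ => p /inL /hallway_le1 /= []; lra.
move=> z S'z; apply/LXP; apply: hallway_up (inL z S'z) _ _ => /=.
  by have := suppf_ge (sofa_dot_ubound t) S'z => zt; apply/andP; split; lra.
have := suppf_ge (sofa_dot_ubound (t + pi / 2)) S'z => zt'.
by apply/andP; split; lra.
Qed.

(* [S'] comes arbitrarily close to both outer walls of [LX S' t], so by
   connectedness it meets the diagonal through the inner corner; the points of
   that diagonal inside [LX S' t] lie beyond the corner. *)
Lemma sofa_corner t : 0 <= t <= w -> exists2 m, S' m &
  suppf S' t - 1 <= dot m (uvec t) /\
  suppf S' (t + pi / 2) - 1 <= dot m (uvec (t + pi / 2)).
Proof.
move=> t0w; set P1 := suppf S' t; set P2 := suppf S' (t + pi / 2).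
have [a S'a a_t] : exists2 a, S' a & P1 - 1 < dot a (uvec t).
  by apply: suppf_gt sofa_nonempty _; rewrite -/P1; lra.
have [b S'b b_t'] : exists2 b, S' b & P2 - 1 < dot b (uvec (t + pi / 2)).
  by apply: suppf_gt sofa_nonempty _; rewrite -/P2; lra.
have [a2|a2] := lerP (P2 - 1) (dot a (uvec (t + pi / 2))).
  by exists a => //; split; lra.
have [b1|b1] := lerP (P1 - 1) (dot b (uvec t)).
  by exists b => //; split; lra.
pose h z := (dot z (uvec t) - P1) - (dot z (uvec (t + pi / 2)) - P2).
have /connected_intervalP Ih : connected (h @` S').
  apply: connected_continuous_connected; first by case: sofa => _ [_ [_ []]].
  apply: continuous_subspaceT => z.
  by apply: cvgB; apply: cvgB; try exact: continuous_dot; exact: cvg_cst.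
have [m S'm hm0] : (h @` S') 0.
  by apply: (Ih (h b) (h a)); [exact: imageP|exact: imageP|
    rewrite /h; apply/andP; split; lra].
exists m => //; move: hm0; rewrite /h => hm0.
by case: (LX_corner (sofa_sub_LX t0w S'm)); rewrite -/P1 -/P2 => ?; split; lra.
Qed.

End MovingSofa.

Section MonotoneSofa.
Variables (R : realType) (w : R) (S' S : set (R * R)).
Hypotheses (sofa : moving_sofa w S') (std : standard_position w S').
Hypothesis defS : S = Pw w `&` \bigcap_(t in [set t | 0 <= t <= w]) LX S' t.
Implicit Types (s t : R) (q z : R * R).

Lemma sofa_sub_monotone : S' `<=` S.
Proof.
move=> z S'z; rewrite defS; split; first exact (sofa_sub_Pw sofa std S'z).
by move=> t t0w; exact (sofa_sub_LX sofa t0w S'z).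
Qed.

Lemma monotone_nonempty : S !=set0.
Proof. by have [z S'z] := sofa_nonempty sofa; exists z; exact: sofa_sub_monotone. Qed.

Lemma monotone_sub_Pw : S `<=` Pw w.
Proof. by rewrite defS => z []. Qed.

Lemma monotone_sub_QXp t : 0 <= t <= w -> S `<=` QXp S' t.
Proof. by move=> t0w; rewrite defS => z [_ /(_ t t0w) /LX_sub_QXp]. Qed.

Lemma monotone_sub_QXp_self t : 0 <= t <= w -> S `<=` QXp S t.
Proof.
move=> t0w z Sz; split; apply: suppf_ge Sz.
  by exists (suppf S' t) => _ [p /(monotone_sub_QXp t0w) [Sp _] <-].
by exists (suppf S' (t + pi / 2)) => _ [p /(monotone_sub_QXp t0w) [_ Sp] <-].
Qed.

Lemma monotone_sub_cap : S `<=` cap w S.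
Proof.
move=> z Sz; split; first exact: monotone_sub_Pw.
by move=> t t0w; exact: monotone_sub_QXp_self.
Qed.

Lemma suppf_cap_le t : 0 <= t <= w ->
  suppf (cap w S) t <= suppf S' t /\
  suppf (cap w S) (t + pi / 2) <= suppf S' (t + pi / 2).
Proof.
move=> t0w.
have cap0 : cap w S !=set0.
  by have [z Sz] := monotone_nonempty; exists z; exact: monotone_sub_cap.
have [le1 le2] := suppf_le_of_sub_QXp cap0 (fun z (Kz : cap w S z) => Kz.2 t t0w).
have [le1' le2'] := suppf_le_of_sub_QXp monotone_nonempty (monotone_sub_QXp t0w).
by split; apply: le_trans; eassumption.
Qed.

Lemma niche_point_in_cap q t : fan w q -> 0 <= t <= w ->
  dot q (uvec t) + 1 < suppf S' t ->
  dot q (uvec (t + pi / 2)) + 1 < suppf S' (t + pi / 2) -> cap w S q.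
Proof.
move=> [q2 qw] t0w gap gap'; have /andP[t0 tw] := t0w.
have /andP[_ wpi] := sofa_angle sofa.
have [m S'm [mt mt']] := sofa_corner sofa t0w.
have [a S'a a_t] := suppf_gt (sofa_nonempty sofa) gap.
have [b S'b b_t'] := suppf_gt (sofa_nonempty sofa) gap'.
have below_m s : t <= s <= t + pi / 2 -> dot q (uvec s) <= dot m (uvec s).
  by move=> ts; apply: dot_uvec_le_quarter ts _ _; lra.
have /PwP [/andP[_ m2] /andP[_ mw]] := sofa_sub_Pw sofa std S'm.
have /PwP [/andP[_ a2] _] := sofa_sub_Pw sofa std S'a.
have /PwP [_ /andP[_ bw]] := sofa_sub_Pw sofa std S'b.
split.
  apply/PwP; split; apply/andP; split => //.
    rewrite -[q.2]dot_uvec_pihalf -[m.2]dot_uvec_pihalf in m2 *.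
    by apply: le_trans (below_m _ _) m2; apply/andP; split; lra.
  by apply: le_trans (below_m _ _) mw; apply/andP; split; lra.
move=> s /andP[s0 sw]; have s0w : 0 <= s <= w by apply/andP.
have [m_s m_s'] := monotone_sub_QXp_self s0w (sofa_sub_monotone S'm).
have [a_s _] := monotone_sub_QXp_self s0w (sofa_sub_monotone S'a).
have [_ b_s'] := monotone_sub_QXp_self s0w (sofa_sub_monotone S'b).
split; rewrite /halfp /=.
  have [ts|st] := lerP t s.
    by apply: le_trans (below_m _ _) m_s; apply/andP; split; lra.
  apply: le_trans a_s; apply: (dot_uvec_le_sandwich (b := t) (c := pi / 2));
    rewrite ?dot_uvec_pihalf //; [apply/andP; split|]; lra.
have [st|ts] := lerP s t.
  by apply: le_trans (below_m _ _) m_s'; apply/andP; split; lra.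
apply: le_trans b_s'; apply: (dot_uvec_le_sandwich_rev (b := t + pi / 2) (c := w)) => //.
  by apply/andP; split; lra.
lra.
Qed.

End MonotoneSofa.

Theorem theorem3p17 (R : realType) (w : R) (S : set (R * R)) :
  0 < w <= pi / 2 -> monotone_sofa w S ->
  niche w (cap w S) `<=` cap w S.
Proof.
move=> _ [S' [sofa [std defS]]] q [fan_q [t t0w [qt qt']]].
have [le1 le2] := suppf_cap_le sofa std defS t0w.
apply: (niche_point_in_cap sofa std defS fan_q t0w); first lra.
by rewrite vvecE in qt'; lra.
Qed.
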